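(* Let $(G_1,\prec_1),(G_2,\prec_2),(G_1',\prec_1'),(G_2',\prec_2')$ be POP-graphs such that the compositions below are defined and $(G_2,\prec_2)\circ(G_1,\prec_1)=(G_2',\prec_2')\circ(G_1',\prec_1')$. Then $(G_1,\prec_1)=(G_1',\prec_1')$ implies $(G_2,\prec_2)=(G_2',\prec_2')$, and $(G_2,\prec_2)=(G_2',\prec_2')$ implies $(G_1,\prec_1)=(G_1',\prec_1')$.
   Context: A progressive graph is a finite directed acyclic graph (parallel edges allowed) in which every source and every sink has degree one; degree-one vertices are boundary vertices. An input edge is an edge whose initial vertex is a boundary vertex; an output edge one whose terminal vertex is a boundary vertex. For edges write $e\to e'$ if $e\neq e'$ and there is a directed path whose first edge is $e$ and last edge is $e'$. A planar order on $G$ is a linear order $\prec$ on $E(G)$ such that (P1) $e_1\to e_2$ implies $e_1\prec e_2$; (P2) if $e_1\prec e_2\prec e_3$ and $e_1\to e_3$ then $e_1\to e_2$ or $e_2\to e_3$. A POP-graph is a progressive graph with a planar order. Equality of POP-graphs means isomorphism: bijections of vertices and of edges preserving incidence and direction of edges and the planar orders. Composition: let $(G_1,\prec_1)$, $(G_2,\prec_2)$ be POP-graphs, $G_1$ with output edges $o_1\prec_1\cdots\prec_1 o_n$ and $G_2$ with input edges $i_1\prec_2\cdots\prec_2 i_n$. The progressive graph $G_2\circ G_1$ is obtained from $G_1\sqcup G_2$ by deleting the sinks of $G_1$, the sources of $G_2$ and the edges $o_k,i_k$, and adding for each $k$ a new edge $\overline{e_k}$ from the initial vertex of $o_k$ to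 the terminal vertex of $i_k$. Let $Q_1=\{e\in E(G_1): e\prec_1 o_1\}$, $Q_k=\{e: o_{k-1}\prec_1 e\prec_1 o_k\}$ ($2\le k\le n$), $P_k=\{e\in E(G_2): i_k\prec_2 e\prec_2 i_{k+1}\}$ ($1\le k\le n-1$), $P_n=\{e: i_n\prec_2 e\}$. The order $\prec_2\circ\prec_1$ on $E(G_2\circ G_1)$ lists $Q_1,\{\overline{e_1}\},P_1,\dots,Q_n,\{\overline{e_n}\},P_n$ consecutively, each $Q_k$ ordered by $\prec_1$ and each $P_k$ by $\prec_2$; $(G_2,\prec_2)\circ(G_1,\prec_1):=(G_2\circ G_1,\prec_2\circ\prec_1)$. *)

From mathcomp Require Import all_boot.
Set Implicit Arguments. Unset Strict Implicit. Unset Printing Implicit Defensive.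

Record pgraph := PGraph {
  pV : finType;
  pE : finType;
  psrc : pE -> pV;
  ptgt : pE -> pV
}.

Section Basics.
Variable G : pgraph.
Implicit Types (v : pV G) (e : pE G).

Definition deg v : nat := #|[set e | psrc e == v]| + #|[set e | ptgt e == v]|.
Definition is_source v : bool := [forall e, ptgt e != v].
Definition is_sink v : bool := [forall e, psrc e != v].
Definition boundary v : bool := deg v == 1.

Definition erel : rel (pE G) := fun a b => ptgt a == psrc b.

Definition arrow e e' : bool := (e != e') && connect erel e e'.

Definition acyclic : Prop := forall e e', erel e e' -> ~~ connect erel e' e.

Definition progressive : Prop :=
  acyclic /\ forall v, is_source v || is_sink v -> deg v = 1.

Definition is_input e : bool := boundary (psrc e).
Definition is_output e : bool := boundary (ptgt e).

Definition planar_order (lt : rel (pE G)) : Prop :=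
  [/\ irreflexive lt, transitive lt,
      (forall x y, x != y -> lt x y || lt y x),
      (forall e1 e2, arrow e1 e2 -> lt e1 e2)
    & (forall e1 e2 e3, lt e1 e2 -> lt e2 e3 -> arrow e1 e3 ->
         arrow e1 e2 || arrow e2 e3) ].

Lemma src_not_sink e : ~~ is_sink (psrc e).
Proof. by apply/forallP => /(_ e); rewrite eqxx. Qed.

Lemma tgt_not_source e : ~~ is_source (ptgt e).
Proof. by apply/forallP => /(_ e); rewrite eqxx. Qed.

Lemma tgt_not_sink (h : progressive) e : ~~ is_output e -> ~~ is_sink (ptgt e).
Proof.
move=> ne; apply/negP => hs; move: ne; rewrite /is_output /boundary.
by rewrite h.2 ?hs ?orbT.
Qed.

Lemma src_not_source (h : progressive) e : ~~ is_input e -> ~~ is_source (psrc e).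
Proof.
move=> ne; apply/negP => hs; move: ne; rewrite /is_input /boundary.
by rewrite h.2 ?hs.
Qed.

End Basics.

Record popgraph := POP {
  pg :> pgraph;
  plt : rel (pE pg);
  pprog : progressive pg;
  pplanar : planar_order plt
}.

(* Equality of POP-graphs (more generally of ordered graphs) = isomorphism:
   bijections of vertices and edges preserving incidence/direction and order *)
Definition ord_iso (G H : pgraph) (ltG : rel (pE G)) (ltH : rel (pE H)) : Prop :=
  exists (fV : pV G -> pV H) (fE : pE G -> pE H),
    [/\ bijective fV, bijective fE,
        (forall e, fV (psrc e) = psrc (fE e)),
        (forall e, fV (ptgt e) = ptgt (fE e))
      & (forall e e', ltH (fE e) (fE e') = ltG e e')].

Definition pop_eq (G H : popgraph) : Prop := ord_iso (@plt G) (@plt H).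

Section Composition.
Variables G1 G2 : popgraph.

(* number of output edges of G1 strictly below e (0-based rank for outputs) *)
Definition cntOut (e : pE G1) : nat := #|[set o | is_output o & @plt G1 o e]|.
Definition cntIn (e : pE G2) : nat := #|[set i | is_input i & @plt G2 i e]|.
Definition nOut : nat := #|[set o : pE G1 | is_output o]|.
Definition nIn : nat := #|[set i : pE G2 | is_input i]|.

Definition composable : Prop := nOut = nIn.

Definition cV : finType := Finite.clone
  ({v : pV G1 | ~~ is_sink v} + {v : pV G2 | ~~ is_source v})%type _.

(* edges: E(G1) minus outputs, E(G2) minus inputs, and the new edges
   bar e_k, represented by the pair (o_k, i_k) of the k-th output edge of G1
   and the k-th input edge of G2 *)
Definition newE : finType := Finite.clone
  {p : pE G1 * pE G2 | [&& is_output p.1, is_input p.2 & cntOut p.1 == cntIn p.2]} _.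
Definition cE : finType := Finite.clone
  (({e : pE G1 | ~~ is_output e} + {e : pE G2 | ~~ is_input e}) + newE)%type _.

Definition csrc (e : cE) : cV :=
  match e with
  | inl (inl e1) => inl (exist _ (psrc (val e1)) (src_not_sink (val e1)))
  | inl (inr e2) => inr (exist _ (psrc (val e2)) (src_not_source (pprog G2) (valP e2)))
  | inr p => inl (exist _ (psrc (val p).1) (src_not_sink (val p).1))
  end.

Definition ctgt (e : cE) : cV :=
  match e with
  | inl (inl e1) => inl (exist _ (ptgt (val e1)) (tgt_not_sink (pprog G1) (valP e1)))
  | inl (inr e2) => inr (exist _ (ptgt (val e2)) (tgt_not_source (val e2)))
  | inr p => inr (exist _ (ptgt (val p).2) (tgt_not_source (val p).2))
  end.

Definition comp_graph : pgraph := PGraph csrc ctgt.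

(* Position of the block containing an edge in the list
   Q_1, {bar e_1}, P_1, ..., Q_n, {bar e_n}, P_n  (0-based, 3 blocks per k):
   - e in E(G1) non-output lies in Q_{j+1} where j = #outputs below e (if j < n);
   - bar e_{j+1} is at position 3j+1;
   - e in E(G2) non-input lies in P_c where c = #inputs below e (if c >= 1).
   None = the edge lies in no block. *)
Definition cblock (e : pE comp_graph) : option nat :=
  match e with
  | inl (inl e1) => let j := cntOut (val e1) in
                    if j < nOut then Some (3 * j) else None
  | inl (inr e2) => let c := cntIn (val e2) in
                    if 0 < c then Some (3 * c - 1) else None
  | inr p => Some (3 * cntOut (val p).1 + 1)
  end.

Definition cwithin (e e' : pE comp_graph) : bool :=
  match e, e' with
  | inl (inl a), inl (inl b) => @plt G1 (val a) (val b)
  | inl (inr a), inl (inr b) => @plt G2 (val a) (val b)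
  | _, _ => false
  end.

Definition comp_lt : rel (pE comp_graph) := fun e e' =>
  match cblock e, cblock e' with
  | Some a, Some b => (a < b) || ((a == b) && cwithin e e')
  | _, _ => false
  end.

End Composition.

(* An isomorphism of the composites preserves their order and the reachability
   relation.  Number the blocks Q_1, e_1, P_1, ..., Q_n, e_n, P_n of the composite
   order 0, 1, 2, ....  If G1 = G1', the sizes |Q_k| agree on both sides and the
   blocks can be recognised from the bottom up: once the blocks below Q_k are
   known, Q_k consists of the next |Q_k| edges, the new edge e_k is the one after
   them, and P_k is the maximal run of edges above e_k that are reachable from e_k
   (planarity makes all of P_k reachable from e_k, and no new edge is reachable
   from another).  Hence the isomorphism preserves blocks and restricts to a
   bijection between the edges of G2 and G2' (the P_k together with the e_k, which
   stand for the input edges) preserving order and incidence, so it extends to an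
   isomorphism.  If G2 = G2', the blocks are recognised from the top down, using
   the sizes |P_k| and the edges of Q_k that reach e_k. *)

From mathcomp Require Import all_boot zify.
Set Implicit Arguments. Unset Strict Implicit. Unset Printing Implicit Defensive.

Definition strict_total (T : eqType) (lt : rel T) : Prop :=
  [/\ irreflexive lt, transitive lt & forall x y, x != y -> lt x y || lt y x].

Section Rank.
Variables (T : finType) (lt : rel T).
Hypothesis lt_order : strict_total lt.
Variable S : pred T.

Definition rank x := #|[set s | S s & lt s x]|.

Let lt_irr : irreflexive lt. Proof. by case: lt_order. Qed.
Let lt_trans : transitive lt. Proof. by case: lt_order. Qed.
Let lt_total x y : x != y -> lt x y || lt y x. Proof. by case: lt_order => _ _; apply. Qed.

Lemma rank_mono x y : lt x y -> rank x <= rank y.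
Proof.
move=> lxy; apply: subset_leq_card; apply/subsetP=> s; rewrite !inE.
by case/andP=> -> /lt_trans ->.
Qed.

Lemma rank_monoS x y : S x -> lt x y -> rank x < rank y.
Proof.
move=> Sx lxy; apply/proper_card/properP; split.
  by apply/subsetP=> s; rewrite !inE => /andP[-> /lt_trans->].
by exists x; rewrite !inE ?Sx ?lxy ?lt_irr ?andbF.
Qed.

Lemma lt_of_rank x y : rank x < rank y -> lt x y.
Proof.
move=> r; have [exy|nxy] := eqVneq x y; first by rewrite exy ltnn in r.
by case/orP: (lt_total nxy) => // /rank_mono; rewrite leqNgt r.
Qed.

Lemma ltS_rank x y : S x -> lt x y = (rank x < rank y).
Proof. by move=> Sx; apply/idP/idP => [/(rank_monoS Sx)|/lt_of_rank]. Qed.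

Lemma ltS_rank_le x y : S y -> x != y -> lt x y = (rank x <= rank y).
Proof.
move=> Sy nxy; apply/idP/idP => [/rank_mono//|r].
by case/orP: (lt_total nxy) => // /(rank_monoS Sy); rewrite ltnNge r.
Qed.

Lemma rank_inj x y : S x -> S y -> rank x = rank y -> x = y.
Proof.
move=> Sx Sy r; apply/eqP/negPn/negP => nxy.
by case/orP: (lt_total nxy) => [/(rank_monoS Sx)|/(rank_monoS Sy)]; rewrite r ltnn.
Qed.

Lemma lt_rank_split x y : lt x y = (rank x < rank y) || (rank x == rank y) && lt x y.
Proof.
apply/idP/idP => [lxy|/orP[/lt_of_rank//|/andP[_ ->]//]].
by move: (rank_mono lxy); rewrite leq_eqVlt => /orP[->|->]; rewrite ?lxy ?orbT.
Qed.

Lemma rank_lt_card x : S x -> rank x < #|S|.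
Proof.
move=> Sx; rewrite -cardsE; apply/proper_card/properP; split.
  by apply/subsetP=> s; rewrite !inE => /andP[].
by exists x; rewrite !inE ?Sx ?lt_irr ?andbF.
Qed.

Lemma rank_onto j : j < #|S| -> exists2 s, S s & rank s = j.
Proof.
move=> j_lt; have im_rank : image rank S =i iota 0 #|S|.
  apply: (uniq_min_size _ _ _).2; last by rewrite size_iota size_image.
    by rewrite map_inj_in_uniq ?enum_uniq // => x y; rewrite !mem_enum; apply: rank_inj.
  by move=> i /mapP[s]; rewrite mem_enum => Ss ->; rewrite mem_iota rank_lt_card.
have /mapP[s] : j \in image rank S by rewrite im_rank mem_iota.
by rewrite mem_enum => Ss ->; exists s.
Qed.

End Rank.

Section Paths.
Variables (T : finType) (e : rel T).

Lemma connect_ind (P : T -> Prop) x :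
  P x -> (forall y z, P y -> e y z -> P z) -> forall y, connect e x y -> P y.
Proof.
move=> Px Pe y /connectP[p]; elim: p x Px => [|z p IHp] x Px /=; first by move=> _ ->.
by case/andP=> exz pz; apply: IHp pz; apply: Pe Px exz.
Qed.

Lemma connect_ind_rev (P : T -> Prop) y :
  P y -> (forall x z, P z -> e x z -> P x) -> forall x, connect e x y -> P x.
Proof.
move=> Py Pe x /connectP[p]; elim/last_ind: p y Py => [|p z IHp] y Py /=.
  by move=> _ <-.
rewrite rcons_path last_rcons => /andP[xp ez] zy; subst y.
exact: IHp _ (Pe _ _ Py ez) xp erefl.
Qed.

Lemma connect_neq_first x y : connect e x y -> x != y -> exists2 z, e x z & connect e z y.
Proof.
case/connectP=> [[|z p]] /=; first by move=> _ ->; rewrite eqxx.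
by case/andP=> xz zp -> _; exists z => //; apply/connectP; exists p.
Qed.

Lemma connect_neq_last x y : connect e x y -> x != y -> exists2 z, connect e x z & e z y.
Proof.
case/connectP=> p; elim/last_ind: p => [|p z _] /=; first by move=> _ ->; rewrite eqxx.
rewrite rcons_path last_rcons => /andP[xp pz] -> _.
by exists (last x p) => //; apply/connectP; exists p.
Qed.

End Paths.

Section PartialMapCard.
Variables (T U : finType) (f : T -> option U) (A : {pred T}) (B : {pred U}).
Hypothesis f_inj : {in A &, injective f}.
Hypothesis f_into : forall x, x \in A -> exists2 y, y \in B & f x = Some y.

Lemma leq_card_partial : #|A| <= #|B|.
Proof.
rewrite -(card_in_imset f_inj) -(card_imset B Some_inj).
apply/subset_leq_card/subsetP=> _ /imsetP[x xA ->].
by have [y yB ->] := f_into xA; apply: imset_f.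
Qed.

Lemma card_partial : (forall y, y \in B -> exists2 x, x \in A & f x = Some y) -> #|A| = #|B|.
Proof.
move=> f_onto; apply/eqP; rewrite eqn_leq leq_card_partial /=.
rewrite -(card_in_imset f_inj) -(card_imset B Some_inj).
apply/subset_leq_card/subsetP=> _ /imsetP[y yB ->].
by have [x xA <-] := f_onto y yB; apply: imset_f.
Qed.

End PartialMapCard.

Definition partial_bij (S U : finType) (p : S -> option U) : Prop :=
  (forall s s' u, p s = Some u -> p s' = Some u -> s = s') /\ (forall u, exists s, p s = Some u).

Lemma induced_map (S U V : finType) (p : S -> option U) (q : S -> option V) :
  partial_bij p -> (forall s, (q s == None) = (p s == None)) ->
  exists g : U -> V, forall s u, p s = Some u -> q s = Some (g u).
Proof.
move=> [p_inj p_onto] q_dom.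
have g_ex u : exists v, [exists s, (p s == Some u) && (q s == Some v)].
  have [s su] := p_onto u; case qs: (q s) => [v|]; last by move: (q_dom s); rewrite qs su.
  by exists v; apply/existsP; exists s; rewrite su qs !eqxx.
exists (fun u => xchoose (g_ex u)) => s u su.
have /existsP[s0 /andP[/eqP s0u /eqP <-]] := xchooseP (g_ex u).
by rewrite (p_inj _ _ _ s0u su).
Qed.

Lemma induced_bij (S S' U U' : finType) (p : S -> option U) (p' : S' -> option U') (f : S -> S') :
  partial_bij p -> partial_bij p' -> bijective f ->
  (forall s, (p' (f s) == None) = (p s == None)) ->
  exists g : U -> U', bijective g /\ forall s u, p s = Some u -> p' (f s) = Some (g u).
Proof.
move=> p_bij p'_bij [f' fK f'K] f_dom; have [g gE] := induced_map p_bij f_dom.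
have f'_dom s' : (p (f' s') == None) = (p' s' == None) by rewrite -{2}(f'K s') f_dom.
have [g' g'E] := induced_map p'_bij f'_dom.
exists g; split => //; exists g' => [u|u'].
  by have [s su] := p_bij.2 u; have := g'E _ _ (gE _ _ su); rewrite fK su => -[].
by have [s' su'] := p'_bij.2 u'; have := gE _ _ (g'E _ _ su'); rewrite f'K su' => -[].
Qed.

Section BijTransport.
Variables (T T' : finType) (f : T -> T').
Hypothesis f_bij : bijective f.
Variables (P : pred T) (P' : pred T').
Hypothesis P'f : forall x, P' (f x) = P x.

Lemma card_bij_transport : #|[set x' | P' x']| = #|[set x | P x]|.
Proof.
have [g fK gK] := f_bij.
have -> : [set x' | P' x'] = f @: [set x | P x].
  apply/setP=> x'; rewrite inE -[x' in LHS]gK P'f; apply/idP/imsetP => [Px|[x Px ->]].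
    by exists (g x'); rewrite ?inE ?gK.
  by move: Px; rewrite inE fK.
by rewrite card_imset //; apply: can_inj fK.
Qed.

Lemma existsb_bij_transport : [exists x', P' x'] = [exists x, P x].
Proof.
have [g _ gK] := f_bij; apply/existsP/existsP => [[x' Px']|[x Px]].
  by exists (g x'); rewrite -P'f gK.
by exists (f x); rewrite P'f.
Qed.

Lemma forallb_bij_transport : [forall x', P' x'] = [forall x, P x].
Proof.
have [g _ gK] := f_bij; apply/forallP/forallP => [allP' x|allP x'].
  by rewrite -P'f.
by rewrite -(gK x') P'f.
Qed.

End BijTransport.

Section Levels.
Variables (T : Type) (f g : T -> nat).

Lemma eq_by_levels :
  (forall k, (forall m e, m <= k -> (f e < m) = (g e < m)) -> forall e, (f e == k) = (g e == k)) ->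
  f =1 g.
Proof.
move=> step; have below k m e : m <= k -> (f e < m) = (g e < m).
  elim: k m e => [|k IHk] m e; first by rewrite leqn0 => /eqP->.
  rewrite leq_eqVlt => /orP[/eqP->|]; last exact: IHk.
  by rewrite !ltnS [f e <= k]leq_eqVlt [g e <= k]leq_eqVlt (step k IHk) IHk.
by move=> e; apply/esym/eqP; rewrite -(step _ (below (f e))).
Qed.

Lemma eq_by_levels_down B :
  (forall e, f e < B) -> (forall e, g e < B) ->
  (forall k, k < B -> (forall m e, k <= m -> (m < f e) = (m < g e)) ->
     forall e, (f e == k) = (g e == k)) ->
  f =1 g.
Proof.
move=> fB gB step; have above d m e : B - d <= m -> (m < f e) = (m < g e).
  elim: d m e => [|d IHd] m e Bm.
    by move: (fB e) (gB e) => fe ge; apply/idP/idP; lia.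
  have [Bdm|mBd] := leqP (B - d) m; first exact: IHd.
  have m1 : m.+1 = B - d by lia.
  rewrite [m < f e]leq_eqVlt [m < g e]leq_eqVlt (IHd m.+1); last by rewrite m1.
  congr orb.
  have [m1B|m1B] := ltnP m.+1 B.
    by rewrite ![m.+1 == _]eq_sym (step _ m1B) // => m' e' le; apply: IHd; lia.
  by rewrite !gtn_eqF //; apply: leq_trans m1B.
move=> e; apply/esym/eqP; rewrite -(step _ (fB e)) // => m e' _.
by apply: (above B); rewrite subnn.
Qed.

End Levels.

Definition no_isolated (G : pgraph) : Prop :=
  forall v : pV G, exists e, (psrc e == v) || (ptgt e == v).

Definition incidence_preserving (G G' : pgraph) (g : pE G -> pE G') : Prop :=
  [/\ forall a b, (psrc (g a) == psrc (g b)) = (psrc a == psrc b),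
      forall a b, (ptgt (g a) == ptgt (g b)) = (ptgt a == ptgt b)
    & forall a b, (psrc (g a) == ptgt (g b)) = (psrc a == ptgt b)].

Lemma vertex_map_of_edge_map (G G' : pgraph) (g : pE G -> pE G') :
  incidence_preserving g -> no_isolated G ->
  exists fV : pV G -> pV G',
    (forall e, fV (psrc e) = psrc (g e)) /\ (forall e, fV (ptgt e) = ptgt (g e)).
Proof.
move=> [g_src g_tgt g_src_tgt] G_cov.
pose image v v' := [forall e, ((psrc e == v) == (psrc (g e) == v')) &&
                              ((ptgt e == v) == (ptgt (g e) == v'))].
have image_ex v : exists v', image v v'.
  have [e0 /orP[]/eqP<-] := G_cov v.
    exists (psrc (g e0)); apply/forallP=> e.
    by rewrite g_src (eq_sym (ptgt e)) (eq_sym (ptgt (g e))) g_src_tgt !eqxx.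
  by exists (ptgt (g e0)); apply/forallP=> e; rewrite g_tgt g_src_tgt !eqxx.
exists (fun v => xchoose (image_ex v)); split=> e.
  have /forallP/(_ e)/andP[/eqP + _] := xchooseP (image_ex (psrc e)).
  by rewrite eqxx => /esym/eqP.
have /forallP/(_ e)/andP[_ /eqP] := xchooseP (image_ex (ptgt e)).
by rewrite eqxx => /esym/eqP.
Qed.

Lemma ord_iso_of_edge_bij (G G' : pgraph) (g : pE G -> pE G')
    (lt : rel (pE G)) (lt' : rel (pE G')) :
  bijective g -> incidence_preserving g -> no_isolated G -> no_isolated G' ->
  (forall a b, lt' (g a) (g b) = lt a b) -> ord_iso lt lt'.
Proof.
move=> [g' gK g'K] g_inc G_cov G'_cov g_lt.
have [fV [fV_src fV_tgt]] := vertex_map_of_edge_map g_inc G_cov.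
have g'_inc : incidence_preserving g'.
  case: g_inc => g_src g_tgt g_src_tgt.
  by split=> a b; rewrite -?g_src -?g_tgt -?g_src_tgt !g'K.
have [fV' [fV'_src fV'_tgt]] := vertex_map_of_edge_map g'_inc G'_cov.
exists fV, g; split=> //; last by exists g'.
exists fV' => [v|v'].
  by have [e /orP[]/eqP<-] := G_cov v; rewrite ?fV_src ?fV'_src ?fV_tgt ?fV'_tgt gK.
by have [e /orP[]/eqP<-] := G'_cov v'; rewrite ?fV'_src ?fV_src ?fV'_tgt ?fV_tgt g'K.
Qed.

Section GraphIso.
Variables (G G' : pgraph) (fV : pV G -> pV G') (fE : pE G -> pE G').
Hypotheses (fV_bij : bijective fV) (fE_bij : bijective fE).
Hypotheses (fE_src : forall e, fV (psrc e) = psrc (fE e))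
  (fE_tgt : forall e, fV (ptgt e) = ptgt (fE e)).

Lemma iso_erel a b : erel (fE a) (fE b) = erel a b.
Proof. by rewrite /erel -fE_src -fE_tgt (bij_eq fV_bij). Qed.

Lemma iso_connect a b : connect (@erel G') (fE a) (fE b) = connect (@erel G) a b.
Proof.
have [g fK gK] := fE_bij; apply/idP/idP.
  suff /(_ (fE b)): forall y, connect (@erel G') (fE a) y -> connect (@erel G) a (g y).
    by rewrite fK; apply.
  apply: (connect_ind (P := fun y => connect (@erel G) a (g y))); first by rewrite fK connect0.
  by move=> y z ay yz; apply: connect_trans ay (connect1 _); rewrite -iso_erel !gK.
apply: (connect_ind (P := fun z => connect (@erel G') (fE a) (fE z))); first exact: connect0.
by move=> y z ay yz; apply: connect_trans ay (connect1 _); rewrite iso_erel.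
Qed.

Lemma iso_arrow a b : arrow (fE a) (fE b) = arrow a b.
Proof. by rewrite /arrow iso_connect (bij_eq fE_bij). Qed.

Lemma iso_deg v : deg (fV v) = deg v.
Proof.
rewrite /deg; congr addn; apply: (card_bij_transport fE_bij) => e.
  by rewrite -fE_src (bij_eq fV_bij).
by rewrite -fE_tgt (bij_eq fV_bij).
Qed.

Lemma iso_input e : is_input (fE e) = is_input e.
Proof. by rewrite /is_input /boundary -fE_src iso_deg. Qed.

Lemma iso_output e : is_output (fE e) = is_output e.
Proof. by rewrite /is_output /boundary -fE_tgt iso_deg. Qed.

End GraphIso.

Definition out_rank (G : popgraph) (x : pE G) := rank (@plt G) (@is_output G) x.
Definition in_rank (G : popgraph) (x : pE G) := rank (@plt G) (@is_input G) x.

Section PopGraph.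
Variable G : popgraph.
Implicit Types (v : pV G) (a b e i o x y z : pE G).

Lemma plt_order : strict_total (@plt G).
Proof. by case: (pplanar G). Qed.

Lemma plt_irr : irreflexive (@plt G).
Proof. by case: (pplanar G). Qed.

Lemma plt_of_arrow x y : arrow x y -> plt x y.
Proof. by case: (pplanar G) => _ _ _ + _; apply. Qed.

Lemma plt_planar x y z : plt x y -> plt y z -> arrow x z -> arrow x y || arrow y z.
Proof. by case: (pplanar G) => _ _ _ _; apply. Qed.

Lemma deg_gt1 v y z : ptgt y = v -> psrc z = v -> 1 < deg v.
Proof.
move=> yv zv; rewrite /deg -(addn1 1) leq_add //; apply/card_gt0P.
  by exists z; rewrite inE zv.
by exists y; rewrite inE yv.
Qed.

Lemma erel_not_input y z : erel y z -> ~~ is_input z.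
Proof. by move/eqP=> yz; rewrite /is_input /boundary gtn_eqF // (deg_gt1 yz erefl). Qed.

Lemma erel_not_output y z : erel y z -> ~~ is_output y.
Proof. by move/eqP=> yz; rewrite /is_output /boundary gtn_eqF // (deg_gt1 erefl (esym yz)). Qed.

Lemma arrow_of_erel y z : erel y z -> arrow y z.
Proof.
move=> yz; rewrite /arrow connect1 // andbT; apply/eqP=> eyz; move: yz; rewrite -eyz.
by move/((pprog G).1 y y); rewrite connect0.
Qed.

Lemma exists_erel_to x : ~~ is_input x -> exists y, erel y x.
Proof.
by move/(src_not_source (pprog G)); rewrite negb_forall => /existsP[y]; rewrite negbK; exists y.
Qed.

Lemma exists_erel_from x : ~~ is_output x -> exists y, erel x y.
Proof.
move/(tgt_not_sink (pprog G)); rewrite negb_forall => /existsP[y]; rewrite negbK.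
by exists y; rewrite /erel eq_sym.
Qed.

Lemma no_arrow_to_input x i : is_input i -> ~~ arrow x i.
Proof.
move=> ii; apply/andP=> -[nxi /connect_neq_last/(_ nxi)[z _ /erel_not_input]].
by rewrite ii.
Qed.

Lemma no_arrow_from_output o x : is_output o -> ~~ arrow o x.
Proof.
move=> oo; apply/andP=> -[nox /connect_neq_first/(_ nox)[z /erel_not_output]].
by rewrite oo.
Qed.

Lemma exists_input_arrow a : ~~ is_input a -> exists2 i, is_input i & arrow i a.
Proof.
move=> na; pose ancestor := [pred x | connect (@erel G) x a].
have [x /= xa x_min] := @arg_minnP _ a ancestor (rank (@plt G) predT) (connect0 _ a).
have [ix|nix] := boolP (is_input x).
  by exists x => //; rewrite /arrow xa andbT; apply: contraNneq na => <-.
have [y yx] := exists_erel_to nix.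
have := x_min y (connect_trans (connect1 yx) xa).
by rewrite leqNgt (rank_monoS plt_order) // plt_of_arrow // arrow_of_erel.
Qed.

Lemma exists_output_arrow a : ~~ is_output a -> exists2 o, is_output o & arrow a o.
Proof.
move=> na; pose descendant := [pred x | connect (@erel G) a x].
have [x /= ax x_max] := @arg_maxnP _ a descendant (rank (@plt G) predT) (connect0 _ a).
have [ox|nox] := boolP (is_output x).
  by exists x => //; rewrite /arrow ax andbT; apply: contraNneq na => ->.
have [y xy] := exists_erel_from nox.
have := x_max y (connect_trans ax (connect1 xy)).
by rewrite leqNgt (rank_monoS plt_order) // plt_of_arrow // arrow_of_erel.
Qed.

Lemma arrow_from_last_input i a : is_input i -> ~~ is_input a ->
  in_rank a = (in_rank i).+1 -> arrow i a.
Proof.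
rewrite /in_rank => ii na ra; have [i' ii' i'a] := exists_input_arrow na.
have [<-//|ni'i] := eqVneq i' i.
have i'_i : plt i' i.
  rewrite (ltS_rank plt_order _ ii') ltn_neqAle -ltnS -ra -(ltS_rank plt_order _ ii').
  by rewrite plt_of_arrow // andbT; apply: contra ni'i => /eqP/(rank_inj plt_order ii' ii)->.
have i_a : plt i a by rewrite (ltS_rank plt_order _ ii) ra.
by case/orP: (plt_planar i'_i i_a i'a) => //; rewrite (negbTE (no_arrow_to_input _ ii)).
Qed.

Lemma arrow_to_first_output o a : is_output o -> ~~ is_output a ->
  out_rank a = out_rank o -> arrow a o.
Proof.
rewrite /out_rank => oo na ra; have [o' oo' ao'] := exists_output_arrow na.
have [<-//|no'o] := eqVneq o' o.
have a_o : plt a o.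
  by rewrite (ltS_rank_le plt_order oo) ?ra //; apply: contraNneq na => ->.
have o_o' : plt o o'.
  rewrite (ltS_rank plt_order _ oo) ltn_neqAle -ra (rank_mono plt_order) ?plt_of_arrow // andbT.
  by rewrite ra; apply: contra no'o => /eqP/(rank_inj plt_order oo oo')->.
by case/orP: (plt_planar a_o o_o' ao') => //; rewrite (negbTE (no_arrow_from_output _ oo)).
Qed.

Lemma popgraph_no_isolated : no_isolated G.
Proof.
move=> v; have [/existsP//|] := boolP [exists e, (psrc e == v) || (ptgt e == v)].
rewrite negb_exists => /forallP isolated.
have no_src : [set e | psrc e == v] = set0.
  by apply/setP=> e; rewrite !inE; case/norP: (isolated e) => /negbTE.
have no_tgt : [set e | ptgt e == v] = set0.
  by apply/setP=> e; rewrite !inE; case/norP: (isolated e) => _ /negbTE.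
have v_source : is_source v by apply/forallP=> e; case/norP: (isolated e).
by move: ((pprog G).2 v); rewrite v_source /deg no_src no_tgt cards0 => /(_ isT).
Qed.

Lemma input_src_eq i a : is_input i -> (psrc i == psrc a) = (i == a).
Proof.
move=> ii; apply/idP/idP => [/eqP ia|/eqP<-//]; apply/contraT => nia; move: ii.
have ia_src : [set i; a] \subset [set e | psrc e == psrc i].
  by apply/subsetP=> z; rewrite !inE => /orP[]/eqP->; rewrite ?ia.
rewrite /is_input /boundary /deg gtn_eqF // ltn_addr //.
by apply: leq_trans (subset_leq_card ia_src); rewrite cards2 nia.
Qed.

Lemma output_tgt_eq o a : is_output o -> (ptgt o == ptgt a) = (o == a).
Proof.
move=> oo; apply/idP/idP => [/eqP oa|/eqP<-//]; apply/contraT => noa; move: oo.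
have oa_tgt : [set o; a] \subset [set e | ptgt e == ptgt o].
  by apply/subsetP=> z; rewrite !inE => /orP[]/eqP->; rewrite ?oa.
rewrite /is_output /boundary /deg gtn_eqF // ltn_addl //.
by apply: leq_trans (subset_leq_card oa_tgt); rewrite cards2 noa.
Qed.

Lemma input_src_tgt i a : is_input i -> (psrc i == ptgt a) = false.
Proof.
move=> ii; apply: contraTF ii => /eqP ia.
by rewrite /is_input /boundary gtn_eqF // (deg_gt1 (esym ia) erefl).
Qed.

Lemma output_tgt_src o a : is_output o -> (psrc a == ptgt o) = false.
Proof.
move=> oo; apply: contraTF oo => /eqP ao.
by rewrite /is_output /boundary gtn_eqF // (deg_gt1 erefl ao).
Qed.

End PopGraph.

Section Composition.
Variables G1 G2 : popgraph.
Hypothesis G12 : composable G1 G2.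
Notation G := (comp_graph G1 G2).

Lemma cntOutE (x : pE G1) : cntOut x = out_rank x. Proof. by []. Qed.

Lemma cntInE (x : pE G2) : cntIn x = in_rank x. Proof. by []. Qed.

Lemma nOutE : nOut G1 = #|@is_output G1|.
Proof. exact: cardsE. Qed.

Lemma nOut_card_inputs : nOut G1 = #|@is_input G2|.
Proof. by rewrite G12; exact: cardsE. Qed.

Lemma out_rank_lt (x : pE G1) : out_rank x < nOut G1.
Proof.
rewrite nOutE; have [ox|nox] := boolP (is_output x).
  exact: (rank_lt_card (plt_order G1) ox).
have [o oo /plt_of_arrow xo] := exists_output_arrow nox.
exact: leq_ltn_trans (rank_mono (plt_order G1) _ xo) (rank_lt_card (plt_order G1) oo).
Qed.

Lemma in_rank_le (x : pE G2) : in_rank x <= nOut G1.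
Proof.
rewrite nOut_card_inputs -cardsE.
by apply/subset_leq_card/subsetP=> s; rewrite !inE => /andP[].
Qed.

Lemma in_rank_gt0 (x : pE G2) : ~~ is_input x -> 0 < in_rank x.
Proof.
case/exists_input_arrow=> i ii /plt_of_arrow ix.
exact: leq_ltn_trans (rank_monoS (plt_order G2) ii ix).
Qed.

Lemma bridgeP (p : newE G1 G2) :
  [/\ is_output (val p).1, is_input (val p).2 & out_rank (val p).1 = in_rank (val p).2].
Proof. by case: p => -[o i] /= /and3P[-> -> /eqP]. Qed.

Lemma bridge_exists j : j < nOut G1 -> exists p : newE G1 G2, out_rank (val p).1 = j.
Proof.
move=> j_lt; have [o oo oj] := rank_onto (plt_order G1) (leq_trans j_lt (eq_leq nOutE)).
have [i ii ij] := rank_onto (plt_order G2) (leq_trans j_lt (eq_leq nOut_card_inputs)).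
have oi : [&& is_output (o, i).1, is_input (o, i).2 & cntOut (o, i).1 == cntIn (o, i).2].
  by rewrite /= oo ii; apply/eqP; exact: etrans oj (esym ij).
by exists (exist _ (o, i) oi).
Qed.

Lemma bridge_inj1 (p q : newE G1 G2) : (val p).1 = (val q).1 -> p = q.
Proof.
move=> pq1; apply/val_inj/injective_projections => //.
have [_ ip rp] := bridgeP p; have [_ iq rq] := bridgeP q.
apply: (rank_inj (plt_order G2) ip iq).
by change (in_rank (val p).2 = in_rank (val q).2); rewrite -rp -rq pq1.
Qed.

Lemma bridge_inj2 (p q : newE G1 G2) : (val p).2 = (val q).2 -> p = q.
Proof.
move=> pq2; apply/val_inj/injective_projections => //.
have [op _ rp] := bridgeP p; have [oq _ rq] := bridgeP q.
apply: (rank_inj (plt_order G1) op oq).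
by change (out_rank (val p).1 = out_rank (val q).1); rewrite rp rq pq2.
Qed.

Definition blk (e : pE G) : nat := odflt 0 (cblock e).

Lemma cblockE e : cblock e = Some (blk e).
Proof.
rewrite /blk; case: e => [[x|x]|p] //=; first by rewrite cntOutE out_rank_lt.
by rewrite cntInE in_rank_gt0 //; case: x.
Qed.

Lemma comp_ltE a b : comp_lt a b = (blk a < blk b) || (blk a == blk b) && cwithin a b.
Proof. by rewrite /comp_lt !cblockE. Qed.

Lemma blk_left x : blk (inl (inl x)) = 3 * out_rank (val x).
Proof. by rewrite /blk /= cntOutE out_rank_lt. Qed.

Lemma blk_right x : blk (inl (inr x)) = 3 * in_rank (val x) - 1.
Proof. by rewrite /blk /= cntInE in_rank_gt0 //; case: x. Qed.

Lemma blk_bridge p : blk (inr p) = 3 * out_rank (val p).1 + 1.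
Proof. by []. Qed.

Lemma in_rank_right_gt0 (x : {e : pE G2 | ~~ is_input e}) : 0 < in_rank (val x).
Proof. by apply: in_rank_gt0; case: x. Qed.

Lemma blk_lt e : blk e < 3 * nOut G1.
Proof.
case: e => [[x|x]|p].
- by rewrite blk_left; have := out_rank_lt (val x); lia.
- by rewrite blk_right; have := in_rank_le (val x); have := in_rank_right_gt0 x; lia.
- by rewrite blk_bridge; have := out_rank_lt (val p).1; lia.
Qed.

Lemma blk_mod3 e :
  blk e %% 3 = match e with inl (inl _) => 0 | inl (inr _) => 2 | inr _ => 1 end.
Proof.
case: e => [[x|x]|p].
- by rewrite blk_left; lia.
- by rewrite blk_right; have := in_rank_right_gt0 x; lia.
- by rewrite blk_bridge; lia.
Qed.

Lemma blk_eq3 e j : blk e = 3 * j -> exists2 x, e = inl (inl x) & out_rank (val x) = j.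
Proof.
case: e => [[x|x]|p].
- by rewrite blk_left => e_j; exists x => //; lia.
- by rewrite blk_right; have := in_rank_right_gt0 x; lia.
- by rewrite blk_bridge; lia.
Qed.

Lemma blk_eq31 e j : blk e = 3 * j + 1 -> exists2 p, e = inr p & out_rank (val p).1 = j.
Proof.
case: e => [[x|x]|p].
- by rewrite blk_left; lia.
- by rewrite blk_right; have := in_rank_right_gt0 x; lia.
- by rewrite blk_bridge => e_j; exists p => //; lia.
Qed.

Lemma blk_eq32 e j : blk e = 3 * j + 2 -> exists2 x, e = inl (inr x) & in_rank (val x) = j.+1.
Proof.
case: e => [[x|x]|p].
- by rewrite blk_left; lia.
- by rewrite blk_right => e_j; exists x => //; have := in_rank_right_gt0 x; lia.
- by rewrite blk_bridge; lia.
Qed.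

Definition left_proj (e : pE G) : option (pE G1) :=
  match e with inl (inl x) => Some (val x) | inl (inr _) => None | inr p => Some (val p).1 end.

Definition right_proj (e : pE G) : option (pE G2) :=
  match e with inl (inl _) => None | inl (inr x) => Some (val x) | inr p => Some (val p).2 end.

Lemma left_proj_inj e e' a : left_proj e = Some a -> left_proj e' = Some a -> e = e'.
Proof.
case: e => [[x|x]|p] //=; case: e' => [[y|y]|q] //= [<-] //.
- by case=> /val_inj->.
- by case=> xq; have [oq _ _] := bridgeP q; move: (valP x); rewrite /= -xq oq.
- by case=> py; have [op _ _] := bridgeP p; move: (valP y); rewrite /= py op.
- by case=> /esym/bridge_inj1->.
Qed.

Lemma right_proj_inj e e' a : right_proj e = Some a -> right_proj e' = Some a -> e = e'.
Proof.
case: e => [[x|x]|p] //=; case: e' => [[y|y]|q] //= [<-] //.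
- by case=> /val_inj->.
- by case=> xq; have [_ iq _] := bridgeP q; move: (valP x); rewrite /= -xq iq.
- by case=> py; have [_ ip _] := bridgeP p; move: (valP y); rewrite /= py ip.
- by case=> /esym/bridge_inj2->.
Qed.

Lemma left_proj_onto a : exists e, left_proj e = Some a.
Proof.
have [oa|na] := boolP (is_output a); last by exists (inl (inl (exist _ a na))).
have [p pa] := bridge_exists (out_rank_lt a); exists (inr p) => /=; congr Some.
by have [op _ _] := bridgeP p; apply: (rank_inj (plt_order G1) op oa).
Qed.

Lemma right_proj_onto a : exists e, right_proj e = Some a.
Proof.
have [ia|na] := boolP (is_input a); last by exists (inl (inr (exist _ a na))).
have a_lt : in_rank a < nOut G1.
  by rewrite nOut_card_inputs; apply: (rank_lt_card (plt_order G2) ia).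
have [p pa] := bridge_exists a_lt; exists (inr p) => /=; congr Some.
have [_ ip rp] := bridgeP p; apply: (rank_inj (plt_order G2) ip ia).
by change (in_rank (val p).2 = in_rank a); rewrite -rp.
Qed.

Lemma left_proj_bij : partial_bij left_proj.
Proof. by split; [exact: left_proj_inj | exact: left_proj_onto]. Qed.

Lemma right_proj_bij : partial_bij right_proj.
Proof. by split; [exact: right_proj_inj | exact: right_proj_onto]. Qed.

Lemma left_proj_None e : (left_proj e == None) = (blk e %% 3 == 2).
Proof. by rewrite blk_mod3; case: e => [[]|]. Qed.

Lemma right_proj_None e : (right_proj e == None) = (blk e %% 3 == 0).
Proof. by rewrite blk_mod3; case: e => [[]|]. Qed.

Lemma erel_right_proj e e' y z : right_proj e = Some y -> right_proj e' = Some z ->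
  erel y z -> erel e e'.
Proof.
move=> ey; case: e' => [[x|x]|q] //= [<-] yx.
  by case: e ey yx => [[w|w]|p] //= [<-] wx; apply/eqP; congr inr; exact/val_inj/eqP.
by have [_ iq _] := bridgeP q; move: (erel_not_input yx); rewrite iq.
Qed.

Lemma erel_left_proj e e' y z : left_proj e = Some y -> left_proj e' = Some z ->
  erel y z -> erel e e'.
Proof.
move=> + ez; case: e => [[x|x]|q] //= [<-] xz.
  by case: e' ez xz => [[w|w]|p] //= [<-] xw; apply/eqP; congr inl; exact/val_inj/eqP.
by have [oq _ _] := bridgeP q; move: (erel_not_output xz); rewrite oq.
Qed.

Lemma arrow_right_proj e e' y z : right_proj e = Some y -> right_proj e' = Some z ->
  arrow y z -> arrow e e'.
Proof.
move=> ey ez /andP[nyz yz]; apply/andP; split.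
  by apply: contraNneq nyz => ee'; move: ey; rewrite ee' ez => -[->].
pose lifts w := forall e'', right_proj e'' = Some w -> connect (@erel G) e e''.
suff: lifts z by apply.
apply: (connect_ind (P := lifts)) yz => [e'' /(right_proj_inj ey)->|u w IH uw e'' ew].
  exact: connect0.
have [eu eu_u] := right_proj_onto u.
exact: connect_trans (IH _ eu_u) (connect1 (erel_right_proj eu_u ew uw)).
Qed.

Lemma arrow_left_proj e e' y z : left_proj e = Some y -> left_proj e' = Some z ->
  arrow y z -> arrow e e'.
Proof.
move=> ey ez /andP[nyz yz]; apply/andP; split.
  by apply: contraNneq nyz => ee'; move: ey; rewrite ee' ez => -[->].
pose lifts w := forall e'', left_proj e'' = Some w -> connect (@erel G) e'' e'.
suff: lifts y by apply.
apply: (connect_ind_rev (P := lifts)) yz => [e'' /(left_proj_inj ez)->|u w IH uw e'' eu].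
  exact: connect0.
have [ew ew_w] := left_proj_onto w.
exact: connect_trans (connect1 (erel_left_proj eu ew_w uw)) (IH _ ew_w).
Qed.

Lemma arrow_from_bridge p e : arrow (inr p : pE G) e -> exists x, e = inl (inr x).
Proof.
case/andP=> npe pe; pose right_or_p (w : pE G) := w = inr p \/ exists x, w = inl (inr x).
have [ep|//] : right_or_p e; last by rewrite ep eqxx in npe.
apply: (connect_ind (P := right_or_p)) pe => [|w w' Pw]; first by left.
case: w' => [[x|x]|q]; [|by right; exists x|]; by case: Pw => [->|[? ->]].
Qed.

Lemma arrow_to_bridge p e : arrow e (inr p : pE G) -> exists x, e = inl (inl x).
Proof.
case/andP=> nep ep; pose left_or_p (w : pE G) := w = inr p \/ exists x, w = inl (inl x).
have [ep'|//] : left_or_p e; last by rewrite ep' eqxx in nep.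
apply: (connect_ind_rev (P := left_or_p)) ep => [|w w' Pw']; first by left.
case: w => [[x|x]|q]; [by right; exists x | |]; by case: Pw' => [->|[? ->]].
Qed.

Lemma comp_lt_blk a b : comp_lt a b -> blk a <= blk b.
Proof. by rewrite comp_ltE => /orP[/ltnW//|/andP[/eqP->]]. Qed.

Lemma blk_comp_lt a b : blk a < blk b -> comp_lt a b.
Proof. by rewrite comp_ltE => ->. Qed.

Lemma cwithin_bridge_r (e : pE G) p : cwithin e (inr p) = false.
Proof. by case: e => [[]|]. Qed.

Lemma cwithin_bridge_l (e : pE G) p : cwithin (inr p) e = false.
Proof. by case: e => [[]|]. Qed.

(* [Qsize j] and [Psize j] are the sizes of the blocks Q_(j+1) and P_(j+1). *)
Definition Qsize (j : nat) := #|[set x : pE G1 | ~~ is_output x & out_rank x == j]|.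
Definition Psize (j : nat) := #|[set x : pE G2 | ~~ is_input x & in_rank x == j.+1]|.
Definition count_lower (j : nat) (e : pE G) := #|[set x | (3 * j <= blk x) && comp_lt x e]|.
Definition count_upper (j : nat) (e : pE G) := #|[set x | (blk x <= 3 * j + 2) && comp_lt e x]|.

Lemma card_blk_Q j : #|[set x | blk x == 3 * j]| = Qsize j.
Proof.
apply: (card_partial (f := left_proj)).
- move=> x y; rewrite !inE => /eqP/blk_eq3[a -> _] _ xy.
  exact: (@left_proj_inj _ _ (val a)).
- move=> x; rewrite inE => /eqP/blk_eq3[a -> aj]; exists (val a) => //.
  by rewrite inE aj eqxx andbT; case: a {aj}.
- move=> y; rewrite inE => /andP[ny /eqP yj].
  by exists (inl (inl (exist _ y ny))); rewrite // inE blk_left yj.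
Qed.

Lemma card_blk_P j : #|[set x | blk x == 3 * j + 2]| = Psize j.
Proof.
apply: (card_partial (f := right_proj)).
- move=> x y; rewrite !inE => /eqP/blk_eq32[a -> _] _ xy.
  exact: (@right_proj_inj _ _ (val a)).
- move=> x; rewrite inE => /eqP/blk_eq32[a -> aj]; exists (val a) => //.
  by rewrite inE aj eqxx andbT; case: a {aj}.
- move=> y; rewrite inE => /andP[ny /eqP yj].
  by exists (inl (inr (exist _ y ny))); rewrite // inE blk_right /= yj; apply/eqP; lia.
Qed.

Lemma count_lower_Q j e : blk e = 3 * j -> count_lower j e < Qsize j.
Proof.
move=> ej; have [a ea aj] := blk_eq3 ej; subst e.
pose below := [set b | ~~ is_output b & (out_rank b == j) && plt b (val a)].
apply: (@leq_ltn_trans #|below|).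
  apply: (leq_card_partial (f := left_proj)).
  - move=> x y; rewrite !inE => /andP[jx /comp_lt_blk xa] _.
    have /blk_eq3[b -> _] : blk x = 3 * j by lia.
    by move=> /esym yb; apply: left_proj_inj yb.
  - move=> x; rewrite inE comp_ltE ej => /andP[jx]; rewrite ltnNge jx /=.
    case/andP=> /eqP/blk_eq3[b -> bj] /= ba; exists (val b) => //.
    by rewrite inE bj eqxx ba (valP b).
apply/proper_card/properP; split.
  by apply/subsetP=> b; rewrite !inE => /and3P[-> -> _].
by exists (val a); rewrite !inE ?aj ?eqxx ?plt_irr ?andbF ?(valP a).
Qed.

Lemma count_lower_bridge j e : blk e = 3 * j + 1 -> count_lower j e = Qsize j.
Proof.
move=> ej; have [p ep _] := blk_eq31 ej; subst e.
rewrite -card_blk_Q; apply: eq_card => x; rewrite !inE comp_ltE cwithin_bridge_r ej.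
by rewrite andbF orbF; apply/idP/idP; lia.
Qed.

Lemma Qsize_lt_count_lower j e : 3 * j + 1 < blk e -> Qsize j < count_lower j e.
Proof.
move=> je; have j_lt : j < nOut G1 by have := blk_lt e; lia.
have [p pj] := bridge_exists j_lt.
rewrite -card_blk_Q; apply/proper_card/properP; split.
  apply/subsetP=> x; rewrite !inE => /eqP xj; rewrite xj leqnn /=.
  by apply: blk_comp_lt; lia.
exists (inr p); rewrite !inE blk_bridge pj; last by apply/eqP; lia.
by rewrite leq_addr /=; apply: blk_comp_lt; rewrite blk_bridge pj.
Qed.

Lemma count_upper_P j e : blk e = 3 * j + 2 -> count_upper j e < Psize j.
Proof.
move=> ej; have [a ea aj] := blk_eq32 ej; subst e.
pose above := [set b | ~~ is_input b & (in_rank b == j.+1) && plt (val a) b].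
apply: (@leq_ltn_trans #|above|).
  apply: (leq_card_partial (f := right_proj)).
  - move=> x y; rewrite !inE => /andP[xj /comp_lt_blk ax] _.
    have /blk_eq32[b -> _] : blk x = 3 * j + 2 by lia.
    by move=> /esym yb; apply: right_proj_inj yb.
  - move=> x; rewrite inE comp_ltE ej => /andP[xj]; rewrite ltnNge xj /= eq_sym.
    case/andP=> /eqP/blk_eq32[b -> bj] /= ab; exists (val b) => //.
    by rewrite inE bj eqxx ab (valP b).
apply/proper_card/properP; split.
  by apply/subsetP=> b; rewrite !inE => /and3P[-> -> _].
by exists (val a); rewrite !inE ?aj ?eqxx ?plt_irr ?andbF ?(valP a).
Qed.

Lemma count_upper_bridge j e : blk e = 3 * j + 1 -> count_upper j e = Psize j.
Proof.
move=> ej; have [p ep _] := blk_eq31 ej; subst e.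
rewrite -card_blk_P; apply: eq_card => x; rewrite !inE comp_ltE cwithin_bridge_l ej.
by rewrite andbF orbF; apply/idP/idP; lia.
Qed.

Lemma Psize_lt_count_upper j e : j < nOut G1 -> blk e < 3 * j + 1 -> Psize j < count_upper j e.
Proof.
move=> j_lt ej; have [p pj] := bridge_exists j_lt.
rewrite -card_blk_P; apply/proper_card/properP; split.
  apply/subsetP=> x; rewrite !inE => /eqP xj; rewrite xj leqnn /=.
  by apply: blk_comp_lt; lia.
exists (inr p); rewrite !inE blk_bridge pj; last by apply/eqP; lia.
by rewrite leq_add2l /=; apply: blk_comp_lt; rewrite blk_bridge pj.
Qed.

Lemma blk_Q_lower j e : 3 * j <= blk e -> (blk e == 3 * j) = (count_lower j e < Qsize j).
Proof.
move=> je; case: (ltngtP (blk e) (3 * j + 1)) => [lt1|gt1|/[dup] e1 /count_lower_bridge->].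
- have ej : blk e = 3 * j by lia.
  by rewrite ej eqxx count_lower_Q.
- have /ltnW := Qsize_lt_count_lower gt1; rewrite leqNgt => /negbTE->.
  by apply/eqP; lia.
- by rewrite ltnn; apply/eqP; lia.
Qed.

Lemma blk_bridge_lower j e : 3 * j <= blk e -> (blk e == 3 * j + 1) = (count_lower j e == Qsize j).
Proof.
move=> je; case: (ltngtP (blk e) (3 * j + 1)) => [lt1|gt1|/count_lower_bridge->].
- have /count_lower_Q : blk e = 3 * j by lia.
  by rewrite ltn_neqAle => /andP[/negbTE->].
- by have := Qsize_lt_count_lower gt1; rewrite ltn_neqAle eq_sym => /andP[/negbTE->].
- by rewrite eqxx.
Qed.

Lemma blk_P_upper j e : j < nOut G1 -> blk e <= 3 * j + 2 ->
  (blk e == 3 * j + 2) = (count_upper j e < Psize j).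
Proof.
move=> j_lt ej; case: (ltngtP (blk e) (3 * j + 1)) => [lt1|gt1|/[dup] e1 /count_upper_bridge->].
- have /ltnW := Psize_lt_count_upper j_lt lt1; rewrite leqNgt => /negbTE->.
  by apply/eqP; lia.
- have e2 : blk e = 3 * j + 2 by lia.
  by rewrite e2 eqxx count_upper_P.
- by rewrite ltnn; apply/eqP; lia.
Qed.

Lemma blk_bridge_upper j e : j < nOut G1 -> blk e <= 3 * j + 2 ->
  (blk e == 3 * j + 1) = (count_upper j e == Psize j).
Proof.
move=> j_lt ej; case: (ltngtP (blk e) (3 * j + 1)) => [lt1|gt1|/count_upper_bridge->].
- by have := Psize_lt_count_upper j_lt lt1; rewrite ltn_neqAle eq_sym => /andP[/negbTE->].
- have /count_upper_P : blk e = 3 * j + 2 by lia.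
  by rewrite ltn_neqAle => /andP[/negbTE->].
- by rewrite eqxx.
Qed.

Lemma arrow_bridge_P j p x :
  out_rank (val p).1 = j -> in_rank (val x) = j.+1 -> arrow (inr p : pE G) (inl (inr x)).
Proof.
move=> pj xj; have [_ ip rp] := bridgeP p.
apply: (@arrow_right_proj _ _ (val p).2 (val x)) => //.
apply: arrow_from_last_input ip (valP x) _.
by change (in_rank (val x) = (in_rank (val p).2).+1); rewrite -rp pj xj.
Qed.

Lemma arrow_Q_bridge j p x :
  out_rank (val p).1 = j -> out_rank (val x) = j -> arrow (inl (inl x) : pE G) (inr p).
Proof.
move=> pj xj; have [op _ _] := bridgeP p.
apply: (@arrow_left_proj _ _ (val x) (val p).1) => //.
apply: arrow_to_first_output op (valP x) _.
by change (out_rank (val x) = out_rank (val p).1); rewrite pj xj.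
Qed.

Lemma blk_P_arrow j e : 3 * j + 2 <= blk e ->
  (blk e == 3 * j + 2) = [exists N, (blk N == 3 * j + 1) && arrow N e &&
      [forall x, comp_lt x e && (3 * j + 2 <= blk x) ==> arrow N x]].
Proof.
move=> je; apply/idP/idP.
  move/eqP=> e2; have [x ex xj] := blk_eq32 e2; subst e.
  have j_lt : j < nOut G1 by have := in_rank_le (val x); lia.
  have [p pj] := bridge_exists j_lt.
  apply/existsP; exists (inr p); rewrite blk_bridge pj eqxx (arrow_bridge_P pj xj) /=.
  apply/forallP=> y; apply/implyP=> /andP[/comp_lt_blk]; rewrite e2 => ye jy.
  have /blk_eq32[z -> zj] : blk y = 3 * j + 2 by lia.
  exact: arrow_bridge_P pj zj.
case/existsP=> N /andP[/andP[/eqP N1 Ne] /forallP N_all].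
have [p eN pj] := blk_eq31 N1; subst N.
have [x ex] := arrow_from_bridge Ne; subst e.
move: je; rewrite blk_right => je; have := in_rank_right_gt0 x.
case: (ltngtP (in_rank (val x)) j.+1) => [|later|xj _]; [lia | | by apply/eqP; lia].
(* [e] lies in a later block, so the next new edge lies below [e] yet is not reachable from [N]. *)
have j1_lt : j.+1 < nOut G1 by have := in_rank_le (val x); lia.
have [q qj] := bridge_exists j1_lt.
have q_x : comp_lt (inr q) (inl (inr x)).
  by apply: blk_comp_lt; rewrite blk_bridge blk_right qj; lia.
have jq : 3 * j + 2 <= blk (inr q) by rewrite blk_bridge qj; lia.
by move: (N_all (inr q)); rewrite q_x jq => /arrow_from_bridge[].
Qed.

Lemma blk_Q_arrow j e : blk e <= 3 * j ->
  (blk e == 3 * j) = [exists N, (blk N == 3 * j + 1) && arrow e N &&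
      [forall x, comp_lt e x && (blk x <= 3 * j) ==> arrow x N]].
Proof.
move=> je; apply/idP/idP.
  move/eqP=> e0; have [x ex xj] := blk_eq3 e0; subst e.
  have j_lt : j < nOut G1 by rewrite -xj out_rank_lt.
  have [p pj] := bridge_exists j_lt.
  apply/existsP; exists (inr p); rewrite blk_bridge pj eqxx (arrow_Q_bridge pj xj) /=.
  apply/forallP=> y; apply/implyP=> /andP[/comp_lt_blk]; rewrite e0 => ey yj.
  have /blk_eq3[z -> zj] : blk y = 3 * j by lia.
  exact: arrow_Q_bridge pj zj.
case/existsP=> N /andP[/andP[/eqP N1 eN] /forallP N_all].
have [p eN' pj] := blk_eq31 N1; subst N.
have [x ex] := arrow_to_bridge eN; subst e.
move: je; rewrite blk_left => je.
case: (ltngtP (out_rank (val x)) j) => [earlier|?|->]; [ | lia | by []].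
have [q qj] := bridge_exists (out_rank_lt (val x)).
have x_q : comp_lt (inl (inl x)) (inr q).
  by apply: blk_comp_lt; rewrite blk_bridge blk_left qj; lia.
have qj' : blk (inr q) <= 3 * j by rewrite blk_bridge qj; lia.
by move: (N_all (inr q)); rewrite x_q qj' => /arrow_to_bridge[].
Qed.

Lemma inl_cV_eq (u v : {v : pV G1 | ~~ is_sink v}) :
  (inl u == inl v :> cV G1 G2) = (val u == val v).
Proof. by apply/eqP/eqP => [[->]|/val_inj->]. Qed.

Lemma inr_cV_eq (u v : {v : pV G2 | ~~ is_source v}) :
  (inr u == inr v :> cV G1 G2) = (val u == val v).
Proof. by apply/eqP/eqP => [[->]|/val_inj->]. Qed.

Lemma left_proj_lt e e' a b : left_proj e = Some a -> left_proj e' = Some b ->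
  plt a b = comp_lt e e'.
Proof.
case: e => [[x|x]|p] //= [<-]; case: e' => [[y|y]|q] //= [<-]; rewrite comp_ltE.
- rewrite !blk_left /= {1}(lt_rank_split (plt_order G1) (@is_output G1)).
  by rewrite -!/(out_rank _) ltn_mul2l eqn_mul2l.
- rewrite cwithin_bridge_r andbF orbF blk_left blk_bridge /=.
  have [oq _ _] := bridgeP q.
  rewrite (ltS_rank_le (plt_order G1) oq); last first.
    by apply: contraNneq (valP x) => xq; rewrite /= xq.
  by rewrite -!/(out_rank _) /=; apply/idP/idP; lia.
- rewrite cwithin_bridge_l andbF orbF blk_left blk_bridge /=.
  have [op _ _] := bridgeP p.
  by rewrite (ltS_rank (plt_order G1) _ op) -!/(out_rank _) /=; apply/idP/idP; lia.
- rewrite cwithin_bridge_r andbF orbF !blk_bridge /=.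
  have [op _ _] := bridgeP p.
  by rewrite (ltS_rank (plt_order G1) _ op) -!/(out_rank _) /=; apply/idP/idP; lia.
Qed.

Lemma right_proj_lt e e' a b : right_proj e = Some a -> right_proj e' = Some b ->
  plt a b = comp_lt e e'.
Proof.
case: e => [[x|x]|p] //= [<-]; case: e' => [[y|y]|q] //= [<-]; rewrite comp_ltE.
- rewrite !blk_right /= {1}(lt_rank_split (plt_order G2) (@is_input G2)) -!/(in_rank _).
  have := in_rank_right_gt0 x; have := in_rank_right_gt0 y; rewrite /= => x_gt0 y_gt0.
  by congr orb; [apply/idP/idP | congr andb; apply/eqP/eqP]; lia.
- rewrite cwithin_bridge_r andbF orbF blk_right blk_bridge /=.
  have [_ iq rq] := bridgeP q; have := in_rank_right_gt0 x; rewrite /= => x_gt0.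
  rewrite (ltS_rank_le (plt_order G2) iq); last first.
    by apply: contraNneq (valP x) => xq; rewrite /= xq.
  by rewrite -!/(in_rank _) -rq /=; apply/idP/idP; lia.
- rewrite cwithin_bridge_l andbF orbF blk_right blk_bridge /=.
  have [_ ip rp] := bridgeP p; have := in_rank_right_gt0 y; rewrite /= => y_gt0.
  by rewrite (ltS_rank (plt_order G2) _ ip) -!/(in_rank _) -rp /=; apply/idP/idP; lia.
- rewrite cwithin_bridge_r andbF orbF !blk_bridge /=.
  have [_ ip rp] := bridgeP p; have [_ iq rq] := bridgeP q.
  by rewrite (ltS_rank (plt_order G2) _ ip) -!/(in_rank _) -rp -rq /=; apply/idP/idP; lia.
Qed.

Lemma left_proj_output e a : left_proj e = Some a -> is_output a = (blk e %% 3 == 1).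
Proof.
rewrite blk_mod3; case: e => [[x|x]|p] //= [<-]; first exact/negbTE/(valP x).
by have [-> _ _] := bridgeP p.
Qed.

Lemma right_proj_input e a : right_proj e = Some a -> is_input a = (blk e %% 3 == 1).
Proof.
rewrite blk_mod3; case: e => [[x|x]|p] //= [<-]; first exact/negbTE/(valP x).
by have [_ -> _] := bridgeP p.
Qed.

Lemma left_proj_src e e' a b : left_proj e = Some a -> left_proj e' = Some b ->
  (psrc a == psrc b) = (csrc e == csrc e').
Proof.
by case: e => [[x|x]|p] //= [<-]; case: e' => [[y|y]|q] //= [<-]; rewrite inl_cV_eq.
Qed.

Lemma left_proj_src_tgt e e' a b : left_proj e = Some a -> left_proj e' = Some b ->
  (psrc a == ptgt b) = (csrc e == ctgt e').
Proof.
case: e => [[x|x]|p] //= [<-]; case: e' => [[y|y]|q] //= [<-]; rewrite ?inl_cV_eq //;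
  by have [oq _ _] := bridgeP q; rewrite output_tgt_src.
Qed.

Lemma left_proj_tgt e e' a b : left_proj e = Some a -> left_proj e' = Some b ->
  (ptgt a == ptgt b) = (a == b) || [&& ~~ is_output a, ~~ is_output b & ctgt e == ctgt e'].
Proof.
case: e => [[x|x]|p] //= [<-]; case: e' => [[y|y]|q] //= [<-].
- rewrite inl_cV_eq /= (valP x) (valP y) /=.
  by apply/idP/idP => [->|/orP[/eqP->|]]; rewrite ?orbT.
- by have [oq _ _] := bridgeP q; rewrite eq_sym output_tgt_eq // oq /= andbF orbF eq_sym.
- by have [op _ _] := bridgeP p; rewrite output_tgt_eq // op /= orbF.
- by have [op _ _] := bridgeP p; rewrite output_tgt_eq // op /= orbF.
Qed.

Lemma right_proj_tgt e e' a b : right_proj e = Some a -> right_proj e' = Some b ->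
  (ptgt a == ptgt b) = (ctgt e == ctgt e').
Proof.
by case: e => [[x|x]|p] //= [<-]; case: e' => [[y|y]|q] //= [<-]; rewrite inr_cV_eq.
Qed.

Lemma right_proj_src_tgt e e' a b : right_proj e = Some a -> right_proj e' = Some b ->
  (psrc a == ptgt b) = (csrc e == ctgt e').
Proof.
case: e => [[x|x]|p] //= [<-]; case: e' => [[y|y]|q] //= [<-]; rewrite ?inr_cV_eq //;
  by have [_ ip _] := bridgeP p; rewrite input_src_tgt.
Qed.

Lemma right_proj_src e e' a b : right_proj e = Some a -> right_proj e' = Some b ->
  (psrc a == psrc b) = (a == b) || [&& ~~ is_input a, ~~ is_input b & csrc e == csrc e'].
Proof.
case: e => [[x|x]|p] //= [<-]; case: e' => [[y|y]|q] //= [<-].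
- rewrite inr_cV_eq /= (valP x) (valP y) /=.
  by apply/idP/idP => [->|/orP[/eqP->|]]; rewrite ?orbT.
- by have [_ iq _] := bridgeP q; rewrite eq_sym input_src_eq // iq /= andbF orbF eq_sym.
- by have [_ ip _] := bridgeP p; rewrite input_src_eq // ip /= orbF.
- by have [_ ip _] := bridgeP p; rewrite input_src_eq // ip /= orbF.
Qed.

End Composition.

Section PopIso.
Variables (G G' : popgraph) (fV : pV G -> pV G') (fE : pE G -> pE G').
Hypotheses (fV_bij : bijective fV) (fE_bij : bijective fE).
Hypotheses (fE_src : forall e, fV (psrc e) = psrc (fE e))
  (fE_tgt : forall e, fV (ptgt e) = ptgt (fE e)).
Hypothesis fE_lt : forall e e', plt (fE e) (fE e') = plt e e'.

Let fE_input := iso_input fV_bij fE_bij fE_src fE_tgt.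
Let fE_output := iso_output fV_bij fE_bij fE_src fE_tgt.

Lemma iso_out_rank e : out_rank (fE e) = out_rank e.
Proof. by apply: (card_bij_transport fE_bij) => x; rewrite fE_output fE_lt. Qed.

Lemma iso_in_rank e : in_rank (fE e) = in_rank e.
Proof. by apply: (card_bij_transport fE_bij) => x; rewrite fE_input fE_lt. Qed.

Lemma iso_Qsize j : Qsize G' j = Qsize G j.
Proof. by apply: (card_bij_transport fE_bij) => x; rewrite fE_output iso_out_rank. Qed.

Lemma iso_Psize j : Psize G' j = Psize G j.
Proof. by apply: (card_bij_transport fE_bij) => x; rewrite fE_input iso_in_rank. Qed.

Lemma iso_nIn : nIn G' = nIn G.
Proof. by apply: (card_bij_transport fE_bij) => x; rewrite fE_input. Qed.

End PopIso.

Lemma div3_cases k : exists j, [\/ k = 3 * j, k = 3 * j + 1 | k = 3 * j + 2].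
Proof.
exists (k %/ 3); have := ltn_pmod k (isT : 0 < 3).
case: (k %% 3) (divn_eq k 3) => [|[|[|r]]] // k_eq _;
  [constructor 1 | constructor 2 | constructor 3]; lia.
Qed.

Section CompositeIso.
Variables G1 G2 G1' G2' : popgraph.
Hypotheses (G12 : composable G1 G2) (G12' : composable G1' G2').
Variables (fV : pV (comp_graph G1 G2) -> pV (comp_graph G1' G2'))
  (fE : pE (comp_graph G1 G2) -> pE (comp_graph G1' G2')).
Hypotheses (fV_bij : bijective fV) (fE_bij : bijective fE).
Hypotheses (fE_src : forall e, fV (psrc e) = psrc (fE e))
  (fE_tgt : forall e, fV (ptgt e) = ptgt (fE e)).
Hypothesis fE_lt : forall e e', comp_lt (fE e) (fE e') = comp_lt e e'.

Let fE_arrow := iso_arrow fV_bij fE_bij fE_src fE_tgt.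

Lemma iso_count_lower j e : (forall x, (3 * j <= blk (fE x)) = (3 * j <= blk x)) ->
  count_lower j (fE e) = count_lower j e.
Proof. by move=> fE_blk; apply: (card_bij_transport fE_bij) => x; rewrite fE_blk fE_lt. Qed.

Lemma iso_count_upper j e : (forall x, (blk (fE x) <= 3 * j + 2) = (blk x <= 3 * j + 2)) ->
  count_upper j (fE e) = count_upper j e.
Proof. by move=> fE_blk; apply: (card_bij_transport fE_bij) => x; rewrite fE_blk fE_lt. Qed.

Lemma iso_blk_of_Qsize : (forall j, Qsize G1' j = Qsize G1 j) -> forall e, blk (fE e) = blk e.
Proof.
move=> Q_eq; apply: (eq_by_levels (f := fun e => blk (fE e))) => k below.
have ge_eq m x : m <= k -> (m <= blk (fE x)) = (m <= blk x).
  by move=> mk; rewrite !(leqNgt m) below.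
have eq_eq m x : m < k -> (blk (fE x) == m) = (blk x == m).
  move=> mk; rewrite !eqn_leq -[blk (fE x) <= m]ltnS -[blk x <= m]ltnS.
  by rewrite !(leqNgt m) !below // ltnW.
have low m x : m <= k -> blk x < m -> (blk (fE x) == k) = (blk x == k).
  move=> mk xm; have fxm : blk (fE x) < m by rewrite below.
  by rewrite !ltn_eqF ?(leq_trans fxm mk) ?(leq_trans xm mk).
move=> e; have [j [kj|kj|kj]] := div3_cases k; subst k.
- have [je|ej] := leqP (3 * j) (blk e); last exact: low _ _ (leqnn _) ej.
  have fje : 3 * j <= blk (fE e) by rewrite ge_eq.
  rewrite (blk_Q_lower G12' fje) (blk_Q_lower G12 je) iso_count_lower ?Q_eq // => x.
  exact: ge_eq.
- have [je|ej] := leqP (3 * j) (blk e); last exact: low _ _ (leq_addr _ _) ej.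
  have fje : 3 * j <= blk (fE e) by rewrite ge_eq ?leq_addr.
  rewrite (blk_bridge_lower G12' fje) (blk_bridge_lower G12 je) iso_count_lower ?Q_eq // => x.
  by rewrite ge_eq ?leq_addr.
- have [je|ej] := leqP (3 * j + 2) (blk e); last exact: low _ _ (leqnn _) ej.
  have fje : 3 * j + 2 <= blk (fE e) by rewrite ge_eq.
  rewrite (blk_P_arrow G12' fje) (blk_P_arrow G12 je).
  apply: (existsb_bij_transport fE_bij) => N; rewrite fE_arrow eq_eq; last by rewrite ltn_add2l.
  congr andb; apply: (forallb_bij_transport fE_bij) => x.
  by rewrite fE_lt ge_eq // fE_arrow.
Qed.

Lemma iso_blk_of_Psize : nOut G1' = nOut G1 -> (forall j, Psize G2' j = Psize G2 j) ->
  forall e, blk (fE e) = blk e.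
Proof.
move=> n_eq P_eq; have fE_blk_lt e : blk (fE e) < 3 * nOut G1 by rewrite -n_eq blk_lt.
apply: (eq_by_levels_down fE_blk_lt (blk_lt G12)) => k kB above.
have le_eq m x : k <= m -> (blk (fE x) <= m) = (blk x <= m).
  by move=> km; rewrite [blk (fE x) <= m]leqNgt [blk x <= m]leqNgt above.
have eq_eq m x : k < m -> (blk (fE x) == m) = (blk x == m).
  by case: m => // m km; rewrite !eqn_leq le_eq ?above // ltnW.
have high m x : k <= m -> m < blk x -> (blk (fE x) == k) = (blk x == k).
  move=> km mx; have fmx : m < blk (fE x) by rewrite above.
  by rewrite !gtn_eqF ?(leq_ltn_trans km fmx) ?(leq_ltn_trans km mx).
move=> e; have [j [kj|kj|kj]] := div3_cases k; subst k.
- have [ej|je] := leqP (blk e) (3 * j); last exact: high _ _ (leqnn _) je.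
  have fej : blk (fE e) <= 3 * j by rewrite le_eq.
  rewrite (blk_Q_arrow G12' fej) (blk_Q_arrow G12 ej).
  apply: (existsb_bij_transport fE_bij) => N; rewrite fE_arrow eq_eq; last by rewrite addn1.
  congr andb; apply: (forallb_bij_transport fE_bij) => x.
  by rewrite fE_lt le_eq // fE_arrow.
- have j_lt : j < nOut G1 by lia.
  have j_lt' : j < nOut G1' by rewrite n_eq.
  have [ej|je] := leqP (blk e) (3 * j + 2); last first.
    by apply: high _ _ _ je; rewrite leq_add2l.
  have fej : blk (fE e) <= 3 * j + 2 by rewrite le_eq ?leq_add2l.
  rewrite (blk_bridge_upper G12' j_lt' fej) (blk_bridge_upper G12 j_lt ej).
  by rewrite iso_count_upper ?P_eq // => x; rewrite le_eq ?leq_add2l.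
- have j_lt : j < nOut G1 by lia.
  have j_lt' : j < nOut G1' by rewrite n_eq.
  have [ej|je] := leqP (blk e) (3 * j + 2); last exact: high _ _ (leqnn _) je.
  have fej : blk (fE e) <= 3 * j + 2 by rewrite le_eq.
  rewrite (blk_P_upper G12' j_lt' fej) (blk_P_upper G12 j_lt ej).
  by rewrite iso_count_upper ?P_eq // => x; rewrite le_eq.
Qed.

Let fV_src e : csrc (fE e) = fV (csrc e). Proof. exact: esym (fE_src e). Qed.
Let fV_tgt e : ctgt (fE e) = fV (ctgt e). Proof. exact: esym (fE_tgt e). Qed.

Lemma pop_eq_right_of_blk : (forall e, blk (fE e) = blk e) -> pop_eq G2 G2'.
Proof.
move=> blk_eq.
have dom e : (right_proj (fE e) == None) = (right_proj e == None).
  by rewrite !right_proj_None blk_eq.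
have [g [g_bij gE]] := induced_bij (right_proj_bij G12) (right_proj_bij G12') fE_bij dom.
have lift a : exists2 e, right_proj e = Some a & right_proj (fE e) = Some (g a).
  by have [e ea] := right_proj_onto G12 a; exists e => //; apply: gE.
rewrite /pop_eq; apply: (ord_iso_of_edge_bij g_bij _ (@popgraph_no_isolated G2)
                                                    (@popgraph_no_isolated G2')).
  split=> a b; have [ea ea_a fea] := lift a; have [eb eb_b feb] := lift b.
  - rewrite (right_proj_src fea feb) (right_proj_src ea_a eb_b) (bij_eq g_bij).
    rewrite (right_proj_input fea) (right_proj_input feb) !blk_eq -(right_proj_input ea_a).
    by rewrite -(right_proj_input eb_b) !fV_src (bij_eq fV_bij).
  - by rewrite (right_proj_tgt fea feb) (right_proj_tgt ea_a eb_b) !fV_tgt (bij_eq fV_bij).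
  - rewrite (right_proj_src_tgt fea feb) (right_proj_src_tgt ea_a eb_b).
    by rewrite fV_src fV_tgt (bij_eq fV_bij).
move=> a b; have [ea ea_a fea] := lift a; have [eb eb_b feb] := lift b.
by rewrite (right_proj_lt fea feb) fE_lt -(right_proj_lt ea_a eb_b).
Qed.

Lemma pop_eq_left_of_blk : (forall e, blk (fE e) = blk e) -> pop_eq G1 G1'.
Proof.
move=> blk_eq.
have dom e : (left_proj (fE e) == None) = (left_proj e == None).
  by rewrite !left_proj_None blk_eq.
have [g [g_bij gE]] := induced_bij (left_proj_bij G12) (left_proj_bij G12') fE_bij dom.
have lift a : exists2 e, left_proj e = Some a & left_proj (fE e) = Some (g a).
  by have [e ea] := left_proj_onto G12 a; exists e => //; apply: gE.
rewrite /pop_eq; apply: (ord_iso_of_edge_bij g_bij _ (@popgraph_no_isolated G1)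
                                                    (@popgraph_no_isolated G1')).
  split=> a b; have [ea ea_a fea] := lift a; have [eb eb_b feb] := lift b.
  - by rewrite (left_proj_src fea feb) (left_proj_src ea_a eb_b) !fV_src (bij_eq fV_bij).
  - rewrite (left_proj_tgt fea feb) (left_proj_tgt ea_a eb_b) (bij_eq g_bij).
    rewrite (left_proj_output fea) (left_proj_output feb) !blk_eq -(left_proj_output ea_a).
    by rewrite -(left_proj_output eb_b) !fV_tgt (bij_eq fV_bij).
  - rewrite (left_proj_src_tgt fea feb) (left_proj_src_tgt ea_a eb_b).
    by rewrite fV_src fV_tgt (bij_eq fV_bij).
move=> a b; have [ea ea_a fea] := lift a; have [eb eb_b feb] := lift b.
by rewrite (left_proj_lt fea feb) fE_lt -(left_proj_lt ea_a eb_b).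
Qed.

Lemma pop_eq_right_of_left : pop_eq G1 G1' -> pop_eq G2 G2'.
Proof.
case=> gV [gE [gV_bij gE_bij gE_src gE_tgt gE_lt]].
apply/pop_eq_right_of_blk/iso_blk_of_Qsize => j.
exact: (iso_Qsize gV_bij gE_bij gE_src gE_tgt gE_lt).
Qed.

Lemma pop_eq_left_of_right : pop_eq G2 G2' -> pop_eq G1 G1'.
Proof.
case=> gV [gE [gV_bij gE_bij gE_src gE_tgt gE_lt]].
apply/pop_eq_left_of_blk/iso_blk_of_Psize => [|j].
  by rewrite G12 G12' (iso_nIn gV_bij gE_bij gE_src gE_tgt).
exact: (iso_Psize gV_bij gE_bij gE_src gE_tgt gE_lt).
Qed.

End CompositeIso.

Unset Implicit Arguments.

Theorem proposition2p3 (G1 G2 G1' G2' : popgraph) :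
  composable G1 G2 -> composable G1' G2' ->
  ord_iso (@comp_lt G1 G2) (@comp_lt G1' G2') ->
  (pop_eq G1 G1' -> pop_eq G2 G2') /\ (pop_eq G2 G2' -> pop_eq G1 G1').
Proof.
move=> G12 G12' [fV [fE [fV_bij fE_bij fE_src fE_tgt fE_lt]]]; split.
  exact: (pop_eq_right_of_left G12 G12' fV_bij fE_bij fE_src fE_tgt fE_lt).
exact: (pop_eq_left_of_right G12 G12' fV_bij fE_bij fE_src fE_tgt fE_lt).
Qed.
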